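(* Let $z\in\mathcal N_h^I$ and $w_h,v_h\in\mathbb V_h$. If $(w_h-v_h)(z)\ge(w_h-v_h)(z')$ for all $z'\in\widetilde{\mathcal N}_{\mathfrak h}(z)$, then $$S^+_{\mathfrak h}w_h(z)\le S^+_{\mathfrak h}v_h(z),\qquad S^-_{\mathfrak h}w_h(z)\ge S^-_{\mathfrak h}v_h(z),$$ and $-\Delta^\diamond_{\infty,\mathfrak h}w_h(z)\ge-\Delta^\diamond_{\infty,\mathfrak h}v_h(z)$.
   Context: Setting: $\Omega\subset\mathbb R^d$ ($d\ge1$) is a bounded domain with continuous boundary. For $r>0$, $\Omega^{(r)}=\{x\in\Omega:\operatorname{dist}(x,\partial\Omega)>r\}$. $\mathcal T_h$ is a mesh of closed simplices, $h=\max_T\operatorname{diam}T$, $\Omega_h$ the interior of the union of the simplices, with $\Omega^{(h)}\subset\Omega_h\subset\Omega$; $\mathcal N_h$ the set of vertices. $\mathbb V_h$: continuous piecewise linear functions on $\mathcal T_h$ with hat basis $\{\hat\varphi_z\}_{z\in\mathcal N_h}$ ($\hat\varphi_z(z')=\delta_{zz'}$), and $\mathcal I_h$ the Lagrange interpolant. Parameters $\mathfrak h=(h,\varepsilon,\theta)$, $\varepsilon\in[h,\operatorname{diam}\Omega]$, $0<\theta\le1$. $\mathcal N_h^I=\mathcal N_h\cap\Omega^{(2\varepsilon)}$. $\mathbb S_\theta$: finite symmetric subset of the unit sphere $\mathbb S$ such that each $v\in\mathbb S$ has $v_\theta\in\mathbb S_\theta$ with $|v-v_\theta|\le\theta$.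 For $z\in\mathcal N_h^I$: $\mathcal N_{\mathfrak h}(z)=\{z\}\cup\{z+\varepsilon v_\theta:v_\theta\in\mathbb S_\theta\}$; for $w\in C(\overline\Omega)$, $S^+_{\mathfrak h}w(z)=\varepsilon^{-1}(\max_{x\in\mathcal N_{\mathfrak h}(z)}w(x)-w(z))$, $S^-_{\mathfrak h}w(z)=\varepsilon^{-1}(w(z)-\min_{x\in\mathcal N_{\mathfrak h}(z)}w(x))$, $-\Delta^\diamond_{\infty,\mathfrak h}w(z)=-\varepsilon^{-1}(S^+_{\mathfrak h}\mathcal I_hw(z)-S^-_{\mathfrak h}\mathcal I_hw(z))$; and $\widetilde{\mathcal N}_{\mathfrak h}(z)=\{z\}\cup\{z'\in\mathcal N_h:\exists v_\theta\in\mathbb S_\theta,\ \hat\varphi_{z'}(z+\varepsilon v_\theta)>0\}$. *)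

From HB Require Import structures.
From mathcomp Require Import all_boot all_order all_algebra.
From mathcomp Require Import all_classical all_reals all_analysis.
Set Implicit Arguments. Unset Strict Implicit. Unset Printing Implicit Defensive.
Import Order.TTheory GRing.Theory Num.Theory.
Import numFieldNormedType.Exports.
Local Open Scope classical_set_scope.
Local Open Scope ring_scope.

Section Defs.
Variables (R : realType) (d : nat).
Notation pt := 'rV[R]_d.

Definition enorm (x : pt) : R := Num.sqrt (\sum_(i < d) x ord0 i ^+ 2).

Definition bdry (A : set pt) : set pt := closure A `\` interior A.
Definition dist_to (x : pt) (A : set pt) : R := inf [set enorm (x - y) | y in A].
Definition ediam (A : set pt) : R :=
  sup [set r | exists x y, A x /\ A y /\ r = enorm (x - y)].

Definition inner_set (Omega : set pt) (r : R) : set pt :=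
  [set x | Omega x /\ r < dist_to x (bdry Omega)].

Definition is_domain (Omega : set pt) : Prop :=
  open Omega /\ connected Omega /\ Omega !=set0 /\ bounded_set Omega.

Definition chull (s : seq pt) : set pt :=
  [set x | exists lam : 'I_(size s) -> R,
     (forall i, 0 <= lam i) /\ \sum_i lam i = 1 /\
     x = \sum_i lam i *: nth 0 s i].

Definition simplex (P : 'I_d.+1 -> pt) : set pt :=
  [set x | exists lam : 'I_d.+1 -> R,
     (forall i, 0 <= lam i) /\ \sum_i lam i = 1 /\ x = \sum_i lam i *: P i].

Definition vert_list (P : 'I_d.+1 -> pt) : seq pt := [seq P i | i <- enum 'I_d.+1].

Definition aff_indep (P : 'I_d.+1 -> pt) : Prop :=
  \det (\matrix_(i < d, j < d) (P (lift ord0 i) - P ord0) ord0 j) != 0.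

Section Mesh.
Variables (n : nat) (T : 'I_n -> 'I_d.+1 -> pt).

Definition meshsize : R := \big[Num.max/0]_(k < n) ediam (simplex (T k)).

Definition Omega_h : set pt := interior (\bigcup_(k in setT) simplex (T k)).

Definition vertices : seq pt := undup (flatten [seq vert_list (T k) | k <- enum 'I_n]).

Definition conforming : Prop :=
  forall k l, simplex (T k) `&` simplex (T l) =
    chull [seq x <- vert_list (T k) | x \in vert_list (T l)].

Definition is_mesh (Omega : set pt) : Prop :=
  (forall k, aff_indep (T k)) /\ conforming /\
  inner_set Omega meshsize `<=` Omega_h /\ Omega_h `<=` Omega.

Definition affine_on (S : set pt) (f : pt -> R) : Prop :=
  exists (a : pt) (b : R), forall x, S x -> f x = \sum_(i < d) a ord0 i * x ord0 i + b.

(** V_h : (continuous) piecewise linear functions on the mesh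
    (only the values on the closure of Omega_h matter). *)
Definition Vh (f : pt -> R) : Prop := forall k, affine_on (simplex (T k)) f.

Definition hat_basis (phi : pt -> pt -> R) : Prop :=
  (forall z, z \in vertices -> Vh (phi z)) /\
  (forall z z', z \in vertices -> z' \in vertices ->
     phi z z' = if z == z' then 1 else 0).

Definition interp (phi : pt -> pt -> R) (w : pt -> R) : pt -> R :=
  fun x => \sum_(z <- vertices) w z * phi z x.

End Mesh.

Definition dir_set (theta : R) (Sth : seq pt) : Prop :=
  (forall v, v \in Sth -> enorm v = 1) /\
  (forall v, v \in Sth -> - v \in Sth) /\
  (forall v : pt, enorm v = 1 -> exists2 vt, vt \in Sth & enorm (v - vt) <= theta).

Section Stencil.
Variables (eps : R) (Sth : seq pt).

Definition stencil (z : pt) : seq pt := z :: [seq z + eps *: v | v <- Sth].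

Definition Splus (w : pt -> R) (z : pt) : R :=
  eps^-1 * (\big[Num.max/w z]_(x <- stencil z) w x - w z).
Definition Sminus (w : pt -> R) (z : pt) : R :=
  eps^-1 * (w z - \big[Num.min/w z]_(x <- stencil z) w x).

Definition neg_lap_diam n (T : 'I_n -> 'I_d.+1 -> pt) (phi : pt -> pt -> R)
  (w : pt -> R) (z : pt) : R :=
  - eps^-1 * (Splus (interp T phi w) z - Sminus (interp T phi w) z).

Definition interior_node n (T : 'I_n -> 'I_d.+1 -> pt) (Omega : set pt) (z : pt) : Prop :=
  z \in vertices T /\ inner_set Omega (2 * eps) z.

Definition Ntilde n (T : 'I_n -> 'I_d.+1 -> pt) (phi : pt -> pt -> R) (z : pt) : set pt :=
  [set z] `|` [set z' | z' \in vertices T /\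
                  exists2 v, v \in Sth & 0 < phi z' (z + eps *: v)].

End Stencil.
End Defs.

(* Every stencil point z + eps v lies farther than eps >= h from the boundary of
   Omega, hence in some simplex of the mesh.  In barycentric coordinates lam of
   that simplex, a vertex z' with lam_z' > 0 has phi_z'(z + eps v) >= lam_z' > 0,
   so z' is in Ntilde(z); since w_h - v_h is affine on the simplex, its value at
   z + eps v is a convex combination of values at most (w_h - v_h)(z).  Thus
   max_stencil w_h - w_h(z) <= max_stencil v_h - v_h(z), and likewise for the
   minima, which are the bounds on S^+ and S^-.  The interpolant reproduces V_h
   on the mesh, so the same bounds hold for I_h w_h and I_h v_h, and the bound
   on the discrete infinity-Laplacian follows. *)

From HB Require Import structures.
From mathcomp Require Import all_boot all_order all_algebra.
From mathcomp Require Import all_classical all_reals all_analysis.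
From mathcomp Require Import ring lra.
Set Implicit Arguments. Unset Strict Implicit. Unset Printing Implicit Defensive.
Import Order.TTheory GRing.Theory Num.Theory.
Import numFieldNormedType.Exports.
Local Open Scope classical_set_scope.
Local Open Scope ring_scope.

Lemma cauchy_schwarz_sum (R : realFieldType) (I : finType) (a b : I -> R) :
  (\sum_i a i * b i) ^+ 2 <= (\sum_i a i ^+ 2) * (\sum_i b i ^+ 2).
Proof.
set A := \sum_i a i ^+ 2; set B := \sum_i b i ^+ 2; set C := \sum_i a i * b i.
have double_sum (F G : I -> R) :
    \sum_i \sum_j F i * G j = (\sum_i F i) * (\sum_j G j).
  by rewrite mulr_suml; apply: eq_bigr => i _; rewrite mulr_sumr.
have lagrange : \sum_i \sum_j (a i * b j - a j * b i) ^+ 2 =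
    \sum_i \sum_j a i ^+ 2 * b j ^+ 2 + \sum_j \sum_i b j ^+ 2 * a i ^+ 2
    - 2 * \sum_i \sum_j (a i * b i) * (a j * b j).
  rewrite exchange_big mulr_sumr -big_split -sumrB /=; apply: eq_bigr => i _.
  rewrite mulr_sumr -big_split -sumrB /=; apply: eq_bigr => j _; ring.
have : 0 <= \sum_i \sum_j (a i * b j - a j * b i) ^+ 2.
  by apply: sumr_ge0 => i _; apply: sumr_ge0 => j _; exact: sqr_ge0.
rewrite lagrange !double_sum -expr2 -/A -/B -/C [B * A]mulrC; lra.
Qed.

Section EuclideanNorm.
Variables (R : realType) (d : nat).
Implicit Types (x y : 'rV[R]_d) (A : set 'rV[R]_d).

Lemma enorm_ge0 x : 0 <= enorm x.
Proof. exact: sqrtr_ge0. Qed.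

Lemma enorm0 : enorm (0 : 'rV[R]_d) = 0.
Proof. by rewrite /enorm big1 ?sqrtr0 // => i _; rewrite mxE expr0n. Qed.

Lemma enormZ (c : R) x : enorm (c *: x) = `|c| * enorm x.
Proof.
rewrite /enorm -sqrtr_sqr -sqrtrM ?sqr_ge0 // mulr_sumr.
by congr Num.sqrt; apply: eq_bigr => i _; rewrite mxE exprMn.
Qed.

Lemma enormN x : enorm (- x) = enorm x.
Proof. by rewrite -scaleN1r enormZ normrN normr1 mul1r. Qed.

Lemma enormD x y : enorm (x + y) <= enorm x + enorm y.
Proof.
rewrite /enorm.
set A := \sum_i x ord0 i ^+ 2; set B := \sum_i y ord0 i ^+ 2.
set C := \sum_i x ord0 i * y ord0 i.
have A_ge0 : 0 <= A by apply: sumr_ge0 => i _; exact: sqr_ge0.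
have B_ge0 : 0 <= B by apply: sumr_ge0 => i _; exact: sqr_ge0.
have -> : \sum_i (x + y) ord0 i ^+ 2 = A + B + 2 * C.
  rewrite /A /B /C mulr_sumr -!big_split /=; apply: eq_bigr => i _.
  rewrite mxE; ring.
have C_le : C <= Num.sqrt A * Num.sqrt B.
  rewrite -sqrtrM //; apply: le_trans (ler_norm C) _.
  rewrite -sqrtr_sqr; apply: ler_wsqrtr; exact: cauchy_schwarz_sum.
rewrite -[leRHS]ger0_norm ?addr_ge0 ?sqrtr_ge0 // -sqrtr_sqr.
by apply: ler_wsqrtr; rewrite sqrrD !sqr_sqrtr //; lra.
Qed.

Lemma dist_to_le A x y : A y -> dist_to x A <= enorm (x - y).
Proof.
move=> Ay; apply: ge_inf; last by exists y.
by exists 0 => _ [y' _ <-]; exact: enorm_ge0.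
Qed.

Lemma dist_to_leD A x y : A !=set0 -> dist_to x A <= enorm (x - y) + dist_to y A.
Proof.
move=> [a0 Aa0]; rewrite -lerBlDl; apply: lb_le_inf; first by exists (enorm (y - a0)), a0.
move=> _ [a Aa <-]; rewrite lerBlDl.
apply: le_trans (dist_to_le x Aa) _.
have -> : x - a = (x - y) + (y - a) by rewrite addrA subrK.
exact: enormD.
Qed.

End EuclideanNorm.

Section Domain.
Variables (R : realType) (d : nat).
Implicit Types (Omega : set 'rV[R]_d) (z w : 'rV[R]_d).

Lemma open_segment_mem Omega z w : open Omega -> Omega z ->
  (forall t : R, 0 <= t <= 1 -> ~ bdry Omega (z + t *: w)) -> Omega (z + w).
Proof.
move=> oO Oz noB; pose f t := z + t *: w.
have f_cont : continuous f.
  move=> t; apply: (@continuousD R _ R (fun=> z) (fun t0 : R => t0 *: w) t).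
    exact: cst_continuous.
  exact: scalel_continuous.
have seg_conn : connected (f @` `[0, 1]%classic).
  apply: connected_continuous_connected; first exact: segment_connected.
  exact: continuous_subspaceT.
have unit_itv (t : R) : (`[0, 1]%classic t) = (0 <= t <= 1) by rewrite /= in_itv.
(* the trace of Omega on the segment is nonempty, relatively open, and,
   since the segment misses the boundary, relatively closed *)
have seg_sub : f @` `[0, 1]%classic `&` Omega = f @` `[0, 1]%classic.
  apply: seg_conn.
  - exists z; split => //; exists 0; first by rewrite unit_itv lexx ler01.
    by rewrite /f scale0r addr0.
  - by exists Omega.
  - exists (closure Omega); first exact: closed_closure.
    apply/seteqP; split => y [Sy Oy]; split => //; first exact: subset_closure.
    apply: contrapT => nOy; case: Sy => t t01 ft.
    apply: (noB t); first by rewrite -unit_itv.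
    rewrite -/(f t) ft; split => //.
    by move/interior_id : oO => ->.
have : (f @` `[0, 1]%classic) (z + w).
  by exists 1; [rewrite unit_itv lexx ler01 | rewrite /f scale1r].
by rewrite -seg_sub => -[].
Qed.

Lemma inner_set_shift Omega (r s : R) z w : open Omega -> 0 <= r ->
  enorm w <= s -> inner_set Omega (r + s) z -> inner_set Omega r (z + w).
Proof.
move=> oO r_ge0 w_le [Oz dz]; have w_ge0 := enorm_ge0 w.
have bdry_n0 : bdry Omega !=set0.
  apply/set0P/negP => /eqP B0; move: dz.
  by rewrite /dist_to B0 image_set0 inf0; lra.
have dist_gt t : 0 <= t <= 1 -> r < dist_to (z + t *: w) (bdry Omega).
  move=> /andP[t_ge0 t_le1]; have := dist_to_leD z (z + t *: w) bdry_n0.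
  rewrite opprD addrA subrr add0r enormN enormZ ger0_norm //.
  have : t * enorm w <= s by rewrite (le_trans _ w_le) // ler_piMl.
  lra.
split; last by have := dist_gt 1; rewrite scale1r; apply; rewrite ler01 lexx.
apply: open_segment_mem => // t t01 Bt.
by have := dist_gt t t01; have := dist_to_le (z + t *: w) Bt; rewrite subrr enorm0; lra.
Qed.

End Domain.

Section Simplex.
Variables (R : realType) (d : nat).
Implicit Types (P : 'I_d.+1 -> 'rV[R]_d) (f : 'rV[R]_d -> R).

Lemma simplex_vertex P i : simplex P (P i).
Proof.
exists (fun j => (j == i)%:R); split; first by move=> j; rewrite ler0n.
split; first by rewrite (bigD1 i) //= eqxx big1 ?addr0 // => j /negbTE ->.
by rewrite (bigD1 i) //= eqxx scale1r big1 ?addr0 // => j /negbTE ->; rewrite scale0r.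
Qed.

Lemma affine_on_simplex P f (lam : 'I_d.+1 -> R) : affine_on (simplex P) f ->
  (forall i, 0 <= lam i) -> \sum_i lam i = 1 ->
  f (\sum_i lam i *: P i) = \sum_i lam i * f (P i).
Proof.
move=> [a [b fE]] lam_ge0 lam_sum1; rewrite fE; last by exists lam.
under [RHS]eq_bigr => i _ do rewrite (fE _ (simplex_vertex P i)) mulrDr mulr_sumr.
rewrite big_split /= -mulr_suml lam_sum1 mul1r exchange_big /=; congr (_ + _).
apply: eq_bigr => l _; rewrite summxE mulr_sumr; apply: eq_bigr => i _.
by rewrite mxE mulrCA.
Qed.

End Simplex.

Section Mesh.
Variables (R : realType) (d n : nat) (T : 'I_n -> 'I_d.+1 -> 'rV[R]_d).

Lemma meshsize_ge0 : 0 <= meshsize T.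
Proof.
by rewrite /meshsize; elim/big_rec: _ => // k m _ m_ge0; rewrite le_max m_ge0 orbT.
Qed.

Lemma vertex_mem k i : T k i \in vertices T.
Proof.
rewrite mem_undup; apply/flatten_mapP; exists k; first by rewrite mem_enum.
by apply: map_f; rewrite mem_enum.
Qed.

Lemma inner_set_mesh_cover (Omega : set 'rV[R]_d) x : is_mesh T Omega ->
  inner_set Omega (meshsize T) x -> exists k, simplex (T k) x.
Proof. by move=> [_ [_ [sub _]]] /sub /interior_subset [k _ ?]; exists k. Qed.

Variable phi : 'rV[R]_d -> 'rV[R]_d -> R.
Hypothesis hat : hat_basis T phi.

Lemma interp_vertex f z : z \in vertices T -> interp T phi f z = f z.
Proof.
move=> zV; rewrite /interp (bigD1_seq z) ?undup_uniq //= hat.2 // eqxx mulr1.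
rewrite big_seq_cond big1 ?addr0 // => z' /andP[z'V z'z].
by rewrite hat.2 // (negbTE z'z) mulr0.
Qed.

Lemma interp_on_simplex f k x : Vh T f -> simplex (T k) x -> interp T phi f x = f x.
Proof.
move=> Vf [lam [lam_ge0 [lam_sum1 ->]]]; rewrite (affine_on_simplex (Vf k)) //.
transitivity (\sum_(z <- vertices T) f z * \sum_i lam i * phi z (T k i)).
  by apply: eq_big_seq => z zV; rewrite (affine_on_simplex (hat.1 z zV k)).
under eq_bigr do rewrite mulr_sumr.
rewrite exchange_big /=; apply: eq_bigr => i _.
rewrite -(interp_vertex f (vertex_mem k i)) /interp mulr_sumr.
by apply: eq_bigr => z _; rewrite mulrCA.
Qed.

Lemma hat_ge_barycentric k (lam : 'I_d.+1 -> R) i :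
  (forall j, 0 <= lam j) -> \sum_j lam j = 1 ->
  lam i <= phi (T k i) (\sum_j lam j *: T k j).
Proof.
move=> lam_ge0 lam_sum1; rewrite (affine_on_simplex (hat.1 _ (vertex_mem k i) k)) //.
rewrite (bigD1 i) //= hat.2 ?vertex_mem // eqxx mulr1 lerDl.
apply: sumr_ge0 => j _; rewrite hat.2 ?vertex_mem //.
by case: ifP => _; rewrite ?mulr1 ?mulr0.
Qed.

End Mesh.

Section BigMaxMin.
Variables (R : realDomainType) (I : eqType) (s : seq I) (F G : I -> R) (i0 : I).
Hypothesis FG_le : forall i, i \in s -> F i - G i <= F i0 - G i0.

Lemma bigmax_increment_le :
  \big[Num.max/F i0]_(i <- s) F i - F i0 <= \big[Num.max/G i0]_(i <- s) G i - G i0.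
Proof.
suff : \big[Num.max/F i0]_(i <- s) F i <= \big[Num.max/G i0]_(i <- s) G i + (F i0 - G i0).
  by lra.
rewrite big_seq; apply: bigmax_le => [|i si].
  by have := bigmax_ge_id s (G i0) xpredT G; lra.
by have := FG_le si; have := le_bigmax_seq (G i0) i xpredT G si isT; lra.
Qed.

Lemma bigmin_increment_le :
  \big[Num.min/F i0]_(i <- s) F i - F i0 <= \big[Num.min/G i0]_(i <- s) G i - G i0.
Proof.
suff : \big[Num.min/F i0]_(i <- s) F i - (F i0 - G i0) <= \big[Num.min/G i0]_(i <- s) G i.
  by lra.
rewrite [leRHS]big_seq; apply: le_bigmin => [|i si].
  by have := bigmin_le_id s (F i0) xpredT F; lra.
by have := FG_le si; have := ge_bigmin_seq (F i0) i xpredT F si isT; lra.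
Qed.

End BigMaxMin.

Section StencilOperators.
Variables (R : realType) (d : nat) (eps : R) (Sth : seq 'rV[R]_d).
Implicit Types (F G : 'rV[R]_d -> R) (z : 'rV[R]_d).

Lemma Splus_le F G z : 0 <= eps ->
  (forall x, x \in stencil eps Sth z -> F x - G x <= F z - G z) ->
  Splus eps Sth F z <= Splus eps Sth G z.
Proof.
by move=> eps_ge0 FG; apply: ler_wpM2l; [rewrite invr_ge0 | exact: bigmax_increment_le].
Qed.

Lemma Sminus_le F G z : 0 <= eps ->
  (forall x, x \in stencil eps Sth z -> F x - G x <= F z - G z) ->
  Sminus eps Sth G z <= Sminus eps Sth F z.
Proof.
move=> eps_ge0 FG; apply: ler_wpM2l; first by rewrite invr_ge0.
by have := bigmin_increment_le FG; lra.
Qed.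

Lemma eq_Splus F G z : {in stencil eps Sth z, F =1 G} ->
  Splus eps Sth F z = Splus eps Sth G z.
Proof. by move=> FG; rewrite /Splus (eq_big_seq _ FG) (FG z (mem_head _ _)). Qed.

Lemma eq_Sminus F G z : {in stencil eps Sth z, F =1 G} ->
  Sminus eps Sth F z = Sminus eps Sth G z.
Proof. by move=> FG; rewrite /Sminus (eq_big_seq _ FG) (FG z (mem_head _ _)). Qed.

End StencilOperators.

Section MeshStencil.
Variables (R : realType) (d n : nat) (Omega : set 'rV[R]_d).
Variables (T : 'I_n -> 'I_d.+1 -> 'rV[R]_d) (phi : 'rV[R]_d -> 'rV[R]_d -> R).
Variables (eps : R) (Sth : seq 'rV[R]_d) (z : 'rV[R]_d).
Hypotheses (oO : open Omega) (mesh : is_mesh T Omega) (hat : hat_basis T phi).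
Hypotheses (h_le_eps : meshsize T <= eps) (Sth_unit : forall u, u \in Sth -> enorm u = 1).
Hypothesis zI : interior_node eps T Omega z.

Lemma stencil_dir_mem_mesh u : u \in Sth -> exists k, simplex (T k) (z + eps *: u).
Proof.
move=> uS; have eps_ge0 := le_trans (meshsize_ge0 T) h_le_eps.
apply: (inner_set_mesh_cover mesh).
have [Ozu dzu] : inner_set Omega eps (z + eps *: u).
  apply: (inner_set_shift (s := eps) oO eps_ge0).
    by rewrite enormZ Sth_unit // ger0_norm ?mulr1.
  by rewrite -mulr2n -mulr_natl; exact: zI.2.
by split => //; exact: le_lt_trans h_le_eps dzu.
Qed.

Lemma stencil_mem_mesh x : x \in stencil eps Sth z -> exists k, simplex (T k) x.
Proof.
rewrite in_cons => /predU1P[-> | /mapP[u uS ->]]; last exact: stencil_dir_mem_mesh.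
move: zI.1; rewrite mem_undup => /flatten_mapP[k _ /mapP[i _ ->]].
by exists k; exact: simplex_vertex.
Qed.

Lemma interp_stencil f : Vh T f -> {in stencil eps Sth z, interp T phi f =1 f}.
Proof. by move=> Vf x /stencil_mem_mesh[k xk]; exact: (interp_on_simplex hat Vf xk). Qed.

Lemma stencil_diff_le (w v : 'rV[R]_d -> R) : Vh T w -> Vh T v ->
  (forall z', Ntilde eps Sth T phi z z' -> w z' - v z' <= w z - v z) ->
  forall x, x \in stencil eps Sth z -> w x - v x <= w z - v z.
Proof.
move=> Vw Vv Ntilde_le x; rewrite in_cons => /predU1P[-> //| /mapP[u uS ->]].
have [k [lam [lam_ge0 [lam_sum1 xE]]]] := stencil_dir_mem_mesh uS.
rewrite xE (affine_on_simplex (Vw k)) // (affine_on_simplex (Vv k)) // -sumrB.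
rewrite -[leRHS]mul1r -lam_sum1 mulr_suml; apply: ler_sum => i _; rewrite -mulrBr.
have := lam_ge0 i; rewrite le0r => /predU1P[-> | lam_gt0]; first by rewrite !mul0r.
apply: ler_wpM2l => //; apply: Ntilde_le; right; split; first exact: vertex_mem.
exists u => //; rewrite xE.
exact: lt_le_trans lam_gt0 (hat_ge_barycentric hat k i lam_ge0 lam_sum1).
Qed.

End MeshStencil.

Theorem lemma3p1 (R : realType) (d : nat) (Omega : set 'rV[R]_d)
  (n : nat) (T : 'I_n -> 'I_d.+1 -> 'rV[R]_d) (phi : 'rV[R]_d -> 'rV[R]_d -> R)
  (eps theta : R) (Sth : seq 'rV[R]_d) (z : 'rV[R]_d) (wh vh : 'rV[R]_d -> R) :
  (0 < d)%N ->
  is_domain Omega ->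
  is_mesh T Omega ->
  hat_basis T phi ->
  meshsize T <= eps -> eps <= ediam Omega ->
  0 < theta -> theta <= 1 ->
  dir_set theta Sth ->
  interior_node eps T Omega z ->
  Vh T wh -> Vh T vh ->
  (forall z', Ntilde eps Sth T phi z z' -> wh z' - vh z' <= wh z - vh z) ->
  Splus eps Sth wh z <= Splus eps Sth vh z /\
  Sminus eps Sth vh z <= Sminus eps Sth wh z /\
  neg_lap_diam eps Sth T phi vh z <= neg_lap_diam eps Sth T phi wh z.
Proof.
(* Of the assumptions on S_theta only the unit length of its elements matters. *)
move=> _ [oO _] mesh hat h_le_eps _ _ _ [Sth_unit _] zI Vw Vv Ntilde_le.
have eps_ge0 : 0 <= eps := le_trans (meshsize_ge0 T) h_le_eps.
have diff_le := stencil_diff_le oO mesh hat h_le_eps Sth_unit zI Vw Vv Ntilde_le.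
have Splus_wv := Splus_le eps_ge0 diff_le.
have Sminus_vw := Sminus_le eps_ge0 diff_le.
split=> //; split=> //.
have interpE := interp_stencil oO mesh hat h_le_eps Sth_unit zI.
rewrite /neg_lap_diam (eq_Splus (interpE _ Vw)) (eq_Sminus (interpE _ Vw)).
rewrite (eq_Splus (interpE _ Vv)) (eq_Sminus (interpE _ Vv)) !mulNr lerN2.
by apply: ler_wpM2l; [rewrite invr_ge0 | lra].
Qed.
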